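(* Let $G$ be a group and $P$ a subgroup of $\operatorname{Aut}(G)$. Then the partition hypergroup $\{G\}_P$ is realizable; more precisely, it is isomorphic to $\mathbf{H}(S)$ where $S=\{C_{[a]}:[a]\in\{G\}_P\}$, $C_{[a]}=\{(x,y)\in G\times G:xy^{-1}\in[a]\}$, is the partition association scheme on $G$.
   Context: For $a\in G$, $[a]=\{g(a):g\in P\}$ and $\{G\}_P$ is the set of these orbits. The partition hypergroup $\{G\}_P$ has hyperoperation $[x]*[y]=\{[z]: z=x'y' \text{ for some } x',y'\in G \text{ with } [x']=[x],[y']=[y]\}$. For a nonempty set $X$: $1_X$ is the diagonal, $p^*=\{(a,b):(b,a)\in p\}$, $xp=\{y:(x,y)\in p\}$. An association scheme on $X$ is a partition $S$ of $X\times X$ with $1_X\in S$, closed under $p\mapsto p^*$, such that for all $p,q,r\in S$ there is a cardinal $a_{pq}^r$ with $|yp\cap zq^*|=a_{pq}^r$ for all $y\in X$, $z\in yr$. $\mathbf{H}(S)$ is the hypergroup on $S$ with $p*q=\{r: a_{pq}^r\ge1\}$ (complex multiplication), identity $1_X$, inverse $p^*$. A hypergroup is realizable if it is isomorphic to $\mathbf{H}(S)$ for some association scheme $S$. (A hypergroup is a nonempty set with a hyperoperation into nonempty subsets that is associative, has a unique identity, unique inverses $h^{-1}$ with $e\in(h^{-1}*h)\cap(h*h^{-1})$, and is reversible.) *)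

(* Groups may be infinite, so the group is given as a carrier
   type with explicit operations and axioms. Subsets are predicates. *)
Set Implicit Arguments.

Section Defs.

Definition is_group (G : Type) (mul : G -> G -> G) (inv : G -> G) (e : G) : Prop :=
  (forall x y z, mul x (mul y z) = mul (mul x y) z) /\
  (forall x, mul e x = x /\ mul x e = x) /\
  (forall x, mul (inv x) x = e /\ mul x (inv x) = e).

Definition bijective_fun (A B : Type) (f : A -> B) : Prop :=
  exists g : B -> A, (forall a, g (f a) = a) /\ (forall b, f (g b) = b).

Definition is_aut (G : Type) (mul : G -> G -> G) (f : G -> G) : Prop :=
  (forall x y, f (mul x y) = mul (f x) (f y)) /\ bijective_fun f.

Definition is_aut_subgroup (G : Type) (mul : G -> G -> G) (P : (G -> G) -> Prop) : Prop :=
  (forall f, P f -> is_aut mul f) /\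
  P (fun x => x) /\
  (forall f g, P f -> P g -> P (fun x => f (g x))) /\
  (forall f, P f -> exists g, P g /\ (forall x, g (f x) = x) /\ (forall x, f (g x) = x)).

Definition orbit (G : Type) (P : (G -> G) -> Prop) (a : G) : G -> Prop :=
  fun x => exists g, P g /\ g a = x.

Definition orbits (G : Type) (P : (G -> G) -> Prop) : Type :=
  { O : G -> Prop | exists a, O = orbit P a }.

Definition partition_hyperop (G : Type) (mul : G -> G -> G) (P : (G -> G) -> Prop)
    (X Y Z : orbits P) : Prop :=
  exists x' y', orbit P x' = proj1_sig X /\ orbit P y' = proj1_sig Y /\
                proj1_sig Z = orbit P (mul x' y').

Definition equinumerous (X : Type) (A B : X -> Prop) : Prop :=
  exists f : {x | A x} -> {x | B x}, bijective_fun f.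

Definition is_association_scheme (X : Type) (S : (X -> X -> Prop) -> Prop) : Prop :=
  (forall p, S p -> exists a b, p a b) /\
  (forall a b, exists p, S p /\ p a b) /\
  (forall p q a b, S p -> S q -> p a b -> q a b -> p = q) /\
  S (fun a b => a = b) /\
  (forall p, S p -> S (fun a b => p b a)) /\
  (* intersection numbers: the cardinal |yp ∩ zq^*| (zq^* = {x : q x z})
     is the same for all (y,z) in r *)
  (forall p q r, S p -> S q -> S r ->
     forall y z y' z', r y z -> r y' z' ->
       equinumerous (fun x => p y x /\ q x z) (fun x => p y' x /\ q x z')).

Definition scheme_elems (X : Type) (S : (X -> X -> Prop) -> Prop) : Type :=
  { p : X -> X -> Prop | S p }.

(* complex multiplication: p*q = { r : a_{pq}^r >= 1 } *)
Definition complex_mul (X : Type) (S : (X -> X -> Prop) -> Prop)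
    (p q r : scheme_elems S) : Prop :=
  exists y z, proj1_sig r y z /\ exists x, proj1_sig p y x /\ proj1_sig q x z.

Definition hyper_isomorphic (T1 T2 : Type)
    (op1 : T1 -> T1 -> T1 -> Prop) (op2 : T2 -> T2 -> T2 -> Prop) : Prop :=
  exists f : T1 -> T2, bijective_fun f /\
    forall x y z, op1 x y z <-> op2 (f x) (f y) (f z).

Definition partition_scheme (G : Type) (mul : G -> G -> G) (inv : G -> G)
    (P : (G -> G) -> Prop) : (G -> G -> Prop) -> Prop :=
  fun R => exists a, R = (fun x y => orbit P a (mul x (inv y))).

End Defs.

(** Every [g] in [P], combined with right translations, gives a permutation
    [x |-> g (x z^-1) z'] of [G] that preserves all the relations
    [C_[a]] (because [x y^-1] is sent to [g (x y^-1)]) and moves any pair of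
    [C_[c]] to any other pair of [C_[c]]; hence the intersection numbers are
    well defined.  The hypergroup isomorphism sends [[a]] to [C_[a]], with
    inverse [R |-> {w | R w e}]. *)

From Stdlib Require Import FunctionalExtensionality PropExtensionality ProofIrrelevance.

Set Implicit Arguments.

Lemma proj1_sig_inj (A : Type) (Q : A -> Prop) (s t : sig Q) :
  proj1_sig s = proj1_sig t -> s = t.
Proof. apply eq_sig_hprop. intros; apply proof_irrelevance. Qed.

Lemma equinumerous_transport (X : Type) (p q : X -> X -> Prop) (phi psi : X -> X)
    (y z y' z' : X) :
  phi y = y' -> phi z = z' ->
  (forall x, psi (phi x) = x) -> (forall x, phi (psi x) = x) ->
  (forall u v, p u v -> p (phi u) (phi v)) -> (forall u v, p u v -> p (psi u) (psi v)) ->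
  (forall u v, q u v -> q (phi u) (phi v)) -> (forall u v, q u v -> q (psi u) (psi v)) ->
  equinumerous (fun x => p y x /\ q x z) (fun x => p y' x /\ q x z').
Proof.
  intros <- <- psiK phiK p_phi p_psi q_phi q_psi.
  unshelve eexists.
  { intros [x xyz]. exists (phi x). destruct xyz; split; auto. }
  unshelve eexists.
  { intros [x xyz]. exists (psi x).
    rewrite <- (psiK y), <- (psiK z). destruct xyz; split; auto. }
  split; intros [x ?]; apply proj1_sig_inj; simpl; auto.
Qed.

Section PartitionScheme.

Variables (G : Type) (mul : G -> G -> G) (inv : G -> G) (e : G).
Hypothesis group_G : is_group mul inv e.

Lemma mulA x y z : mul x (mul y z) = mul (mul x y) z.
Proof. apply group_G. Qed.
Lemma mul1g x : mul e x = x. Proof. apply group_G. Qed.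
Lemma mulg1 x : mul x e = x. Proof. apply group_G. Qed.
Lemma mulVg x : mul (inv x) x = e. Proof. apply group_G. Qed.
Lemma mulgV x : mul x (inv x) = e. Proof. apply group_G. Qed.

Lemma mulg_eq1_inv a b : mul a b = e -> a = inv b.
Proof. intro ab1. rewrite <- (mulg1 a), <- (mulgV b), mulA, ab1, mul1g. reflexivity. Qed.

Lemma invgK x : inv (inv x) = x.
Proof. symmetry; apply mulg_eq1_inv, mulgV. Qed.

Lemma invMg x y : inv (mul x y) = mul (inv y) (inv x).
Proof.
  symmetry; apply mulg_eq1_inv.
  rewrite <- mulA, (mulA (inv x)), mulVg, mul1g, mulVg. reflexivity.
Qed.

Lemma invg1 : inv e = e.
Proof. symmetry; apply mulg_eq1_inv, mul1g. Qed.

Lemma mulgK x y : mul (mul x y) (inv y) = x.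
Proof. rewrite <- mulA, mulgV, mulg1. reflexivity. Qed.

Lemma mulgKV x y : mul (mul x (inv y)) y = x.
Proof. rewrite <- mulA, mulVg, mulg1. reflexivity. Qed.

Lemma divg_eq1 x y : mul x (inv y) = e -> x = y.
Proof. intro xy1. rewrite <- (mulgKV x y), xy1, mul1g. reflexivity. Qed.

Lemma aut1 f : is_aut mul f -> f e = e.
Proof.
  intros [f_mul _].
  assert (idem : mul (f e) (f e) = f e) by (rewrite <- f_mul, mul1g; reflexivity).
  rewrite <- (mulgK (f e) (f e)), idem, mulgV. reflexivity.
Qed.

Lemma autV f x : is_aut mul f -> f (inv x) = inv (f x).
Proof.
  intros aut_f. apply mulg_eq1_inv.
  destruct aut_f as [f_mul f_bij]. rewrite <- f_mul, mulVg. apply aut1. split; auto.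
Qed.

Variable P : (G -> G) -> Prop.
Hypothesis autP : is_aut_subgroup mul P.

Lemma P_aut g : P g -> is_aut mul g.
Proof. apply autP. Qed.

Lemma orbit_refl a : orbit P a a.
Proof. exists (fun x => x). split; [apply autP | reflexivity]. Qed.

Lemma orbit_closed a u g : P g -> orbit P a u -> orbit P a (g u).
Proof.
  intros Pg [k [Pk <-]]. exists (fun x => g (k x)). split; [apply autP; auto | reflexivity].
Qed.

Lemma orbit_sym_transport a u : orbit P a u -> exists h, P h /\ h u = a.
Proof.
  intros [g [Pg <-]].
  destruct autP as [_ [_ [_ P_inv]]].
  destruct (P_inv g Pg) as [h [Ph [hgK _]]]. exists h. auto.
Qed.

Lemma orbit_eq a u : orbit P a u -> orbit P a = orbit P u.
Proof.
  intros a_u. destruct (orbit_sym_transport a_u) as [h [Ph hu]].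
  apply functional_extensionality; intro x; apply propositional_extensionality; split.
  - intros [k [Pk <-]]. rewrite <- hu.
    exists (fun w => k (h w)). split; [apply autP; auto | reflexivity].
  - intros [k [Pk <-]]. apply orbit_closed; auto.
Qed.

Lemma orbit_transport c u v :
  orbit P c u -> orbit P c v -> exists g, P g /\ g u = v.
Proof.
  intros c_u c_v. rewrite (orbit_eq c_u) in c_v. destruct c_v as [g ?]. exists g. auto.
Qed.

Lemma orbit_unit u : orbit P e u -> u = e.
Proof. intros [g [Pg <-]]. apply aut1, P_aut, Pg. Qed.

Lemma orbit_inv c u : orbit P c u -> orbit P (inv c) (inv u).
Proof. intros [g [Pg <-]]. exists g. split; auto. apply autV, P_aut, Pg. Qed.

Definition orbit_rel (a : G) : G -> G -> Prop :=
  fun x y => orbit P a (mul x (inv y)).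

Lemma orbit_rel_eq a x y : orbit_rel a x y -> orbit_rel a = orbit_rel (mul x (inv y)).
Proof. intro a_xy. unfold orbit_rel. rewrite (orbit_eq a_xy). reflexivity. Qed.

Lemma orbit_rel_unit : orbit_rel e = (fun x y => x = y).
Proof.
  apply functional_extensionality; intro x;
  apply functional_extensionality; intro y; apply propositional_extensionality; split.
  - intro e_xy. apply divg_eq1, orbit_unit, e_xy.
  - intros <-. unfold orbit_rel. rewrite mulgV. apply orbit_refl.
Qed.

Lemma orbit_rel_inv c : orbit_rel (inv c) = (fun x y => orbit_rel c y x).
Proof.
  assert (divV : forall x y, inv (mul x (inv y)) = mul y (inv x))
    by (intros; rewrite invMg, invgK; reflexivity).
  apply functional_extensionality; intro x;
  apply functional_extensionality; intro y; apply propositional_extensionality;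
  unfold orbit_rel; split; intro H.
  - rewrite <- (invgK c), <- divV. apply orbit_inv, H.
  - rewrite <- divV. apply orbit_inv, H.
Qed.

Definition translate (g : G -> G) (z z' : G) (x : G) : G := mul (g (mul x (inv z))) z'.

Lemma translate_div g z z' u v :
  P g -> mul (translate g z z' u) (inv (translate g z z' v)) = g (mul u (inv v)).
Proof.
  intro Pg. destruct (P_aut Pg) as [g_mul _]. unfold translate.
  rewrite invMg, mulA, mulgK, <- autV, <- g_mul, invMg, invgK, mulA, mulgKV
    by apply P_aut, Pg.
  reflexivity.
Qed.

Lemma translate_orbit_rel a g z z' u v :
  P g -> orbit_rel a u v -> orbit_rel a (translate g z z' u) (translate g z z' v).
Proof. intros Pg a_uv. unfold orbit_rel. rewrite translate_div by auto. apply orbit_closed; auto. Qed.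

Lemma translateK g h z z' x :
  (forall w, h (g w) = w) -> translate h z' z (translate g z z' x) = x.
Proof. intro hgK. unfold translate. rewrite mulgK, hgK, mulgKV. reflexivity. Qed.

Lemma orbit_rel_intersection_numbers a b c y z y' z' :
  orbit_rel c y z -> orbit_rel c y' z' ->
  equinumerous (fun x => orbit_rel a y x /\ orbit_rel b x z)
               (fun x => orbit_rel a y' x /\ orbit_rel b x z').
Proof.
  intros c_yz c_yz'.
  destruct (orbit_transport c_yz c_yz') as [g [Pg g_yz]].
  destruct autP as [_ [_ [_ P_inv]]].
  destruct (P_inv g Pg) as [h [Ph [hgK ghK]]].
  assert (y_to_y' : translate g z z' y = y') by (unfold translate; rewrite g_yz, mulgKV; auto).
  assert (z_to_z' : translate g z z' z = z')
    by (unfold translate; rewrite mulgV, aut1, mul1g by apply P_aut, Pg; auto).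
  apply equinumerous_transport with (phi := translate g z z') (psi := translate h z' z);
    auto using translateK, translate_orbit_rel.
Qed.

Lemma partition_scheme_eq :
  partition_scheme mul inv P = (fun R => exists a, R = orbit_rel a).
Proof. reflexivity. Qed.

Theorem partition_scheme_is_association_scheme :
  is_association_scheme (partition_scheme mul inv P).
Proof.
  rewrite partition_scheme_eq.
  split; [|split; [|split; [|split; [|split]]]].
  - intros p [a ->]. exists a, e. unfold orbit_rel. rewrite invg1, mulg1. apply orbit_refl.
  - intros x y. exists (orbit_rel (mul x (inv y))).
    split; [exists (mul x (inv y)); reflexivity | apply orbit_refl].
  - intros p q x y [a ->] [b ->] a_xy b_xy.
    rewrite (orbit_rel_eq a_xy), (orbit_rel_eq b_xy). reflexivity.
  - exists e. symmetry. apply orbit_rel_unit.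
  - intros p [c ->]. exists (inv c). symmetry. apply orbit_rel_inv.
  - intros p q r [a ->] [b ->] [c ->]. apply orbit_rel_intersection_numbers.
Qed.

Lemma orbit_rel_at_unit a : (fun w => orbit_rel a w e) = orbit P a.
Proof.
  apply functional_extensionality; intro w. unfold orbit_rel. rewrite invg1, mulg1. reflexivity.
Qed.

(** Forward, take the pair [(x'y', e)] through [y']; backward, split
    [u w^-1 = (u v^-1)(v w^-1)]. *)
Lemma partition_hyperop_orbit_rel a b c :
  (exists x' y', orbit P x' = orbit P a /\ orbit P y' = orbit P b /\
                 orbit P c = orbit P (mul x' y')) <->
  (exists u w, orbit_rel c u w /\ exists v, orbit_rel a u v /\ orbit_rel b v w).
Proof.
  unfold orbit_rel. split.
  - intros [x' [y' [ax' [by' cxy]]]].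
    exists (mul x' y'), e. rewrite invg1, mulg1. split; [rewrite cxy; apply orbit_refl|].
    exists y'. rewrite mulg1, mulgK, <- ax', <- by'. split; apply orbit_refl.
  - intros [u [w [c_uw [v [a_uv b_vw]]]]].
    exists (mul u (inv v)), (mul v (inv w)).
    split; [symmetry; apply orbit_eq; auto|].
    split; [symmetry; apply orbit_eq; auto|].
    rewrite <- mulA, (mulA (inv v)), mulVg, mul1g. apply orbit_eq, c_uw.
Qed.

Theorem partition_hypergroup_realizable :
  hyper_isomorphic (@partition_hyperop G mul P) (@complex_mul G (partition_scheme mul inv P)).
Proof.
  rewrite partition_scheme_eq.
  unshelve eexists.
  { intros [O O_orbit]. exists (fun x y => O (mul x (inv y))).
    destruct O_orbit as [a ->]. exists a. reflexivity. }
  split.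
  - unshelve eexists.
    { intros [R R_scheme]. exists (fun w => R w e).
      destruct R_scheme as [a ->]. exists a. apply orbit_rel_at_unit. }
    split.
    + intros [O [a ->]]. apply proj1_sig_inj. apply orbit_rel_at_unit.
    + intros [R [a ->]]. apply proj1_sig_inj. simpl.
      apply functional_extensionality; intro x; apply functional_extensionality; intro y.
      unfold orbit_rel. rewrite invg1, mulg1. reflexivity.
  - intros [X [a ->]] [Y [b ->]] [Z [c ->]].
    apply partition_hyperop_orbit_rel.
Qed.

End PartitionScheme.

Theorem corollary5p6 (G : Type) (mul : G -> G -> G) (inv : G -> G) (e : G)
    (P : (G -> G) -> Prop) :
  is_group mul inv e ->
  is_aut_subgroup mul P ->
  is_association_scheme (partition_scheme mul inv P) /\
  hyper_isomorphic (@partition_hyperop G mul P)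
                   (@complex_mul G (partition_scheme mul inv P)).
Proof.
  intros group_G autP. split.
  - exact (partition_scheme_is_association_scheme group_G autP).
  - exact (partition_hypergroup_realizable group_G autP).
Qed.
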